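(* Let $R=k\langle x_1,\dots,x_n\rangle/(S)$ be a quadratic monomial algebra, $S$ a set of monomials $x_ix_j$, and suppose $R$ is initially Koszul with Groebner flag $(x_1,\dots,x_n)$. Let $R^!=k\langle x_1^*,\dots,x_n^*\rangle/(\{x_i^*x_j^* : x_ix_j\notin S\})$ be its quadratic dual algebra. Then $R^!$ is initially Koszul with Groebner flag $(x_n^*,\dots,x_1^* )$.
   Context: For a standard algebra $A$ (graded, $A_0=k$, generated by $A_1$) and a basis $y_1,\dots,y_n$ of $A_1$, let $I_k=y_1A+\dots+y_kA$ ($I_0=0$). $A$ is initially Koszul with Groebner flag $(y_1,\dots,y_n)$ if for each $1\le k\le n$ the right ideal $\{a\in A: y_ka\in I_{k-1}\}$ equals $I_j$ for some $j$ (equivalently $\{I_0,\dots,I_n\}$ is a Koszul filtration). *)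

From HB Require Import structures.
From mathcomp Require Import all_boot all_order all_algebra.
Set Implicit Arguments. Unset Strict Implicit. Unset Printing Implicit Defensive.
Import GRing.Theory.
Local Open Scope ring_scope.

(* Free associative algebra K<x_0,...,x_{n-1}>: an element is represented by
   a formal finite sum of terms (c, w) = c * x_{w_1} ... x_{w_m};
   two representations denote the same element iff they have the same
   coefficient function on words. *)
Section FreeAlg.
Variables (K : fieldType) (n : nat).

Definition word := seq 'I_n.
Definition fsum := seq (K * word).

Definition coef (p : fsum) (w : word) : K :=
  \sum_(t <- p | t.2 == w) t.1.

Definition fopp (p : fsum) : fsum := [seq (- t.1, t.2) | t <- p].
Definition fsub (p q : fsum) : fsum := p ++ fopp q.

Definition lmulx (i : 'I_n) (p : fsum) : fsum := [seq (t.1, i :: t.2) | t <- p].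

(* Membership in the two-sided ideal (S) generated by the quadratic monomials
   x_i x_j with S i j: p is a K-linear combination of u x_i x_j v. *)
Definition in_mono_ideal (S : rel 'I_n) (p : fsum) : Prop :=
  exists l : seq (K * word * 'I_n * 'I_n * word),
    all (fun t => S t.1.1.2 t.1.2) l /\
    coef p =1 coef [seq (t.1.1.1.1, t.1.1.1.2 ++ [:: t.1.1.2; t.1.2] ++ t.2) | t <- l].

Definition eqA (S : rel 'I_n) (p q : fsum) : Prop := in_mono_ideal S (fsub p q).

(* Given the flag y_1,...,y_n with y_{m+1} = x_{f m} (m : 'I_n, 0-based),
   I_k = y_1 A + ... + y_k A (as a subset of A, via representatives). *)
Definition in_flag_ideal (S : rel 'I_n) (f : 'I_n -> 'I_n) (k : nat) (a : fsum) : Prop :=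
  exists b : 'I_n -> fsum,
    eqA S a (flatten [seq lmulx (f m) (b m) | m : 'I_n <- enum 'I_n & (nat_of_ord m < k)%N]).

(* A = K<x>/(S) is initially Koszul with Groebner flag (y_1,...,y_n),
   y_{m+1} = x_{f m}: for each 1 <= k <= n (0-based m = k-1), the right ideal
   {a in A : y_k a in I_{k-1}} equals I_j for some 0 <= j <= n. *)
Definition initially_Koszul (S : rel 'I_n) (f : 'I_n -> 'I_n) : Prop :=
  forall m : 'I_n, exists j : nat, (j <= n)%N /\
    forall a : fsum, in_flag_ideal S f m (lmulx (f m) a) <-> in_flag_ideal S f j a.

(* quadratic dual of a quadratic monomial algebra: relations x_i^* x_j^*
   for x_i x_j not in S (generator x_i^* is again indexed by i) *)
Definition dual_rel (S : rel 'I_n) : rel 'I_n := fun i j => ~~ S i j.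

End FreeAlg.

From mathcomp Require Import all_boot all_order all_algebra.
From mathcomp Require Import zify.
Set Implicit Arguments. Unset Strict Implicit. Unset Printing Implicit Defensive.
Import GRing.Theory.
Local Open Scope ring_scope.

(* In a monomial algebra A = K<x>/(S), an element of K<x> is 0 in A iff its
   coefficients vanish on the normal words (those with no factor x_i x_j,
   S i j), and I_k is spanned by the normal words starting with one of the
   first k flag variables. Hence, for a flag of variables, the colon ideal of
   step m is I_j exactly when {l | S (f m) l} is the set of the first j flag
   variables: A is initially Koszul iff every row of S is an initial segment
   of the flag. For the flag (x_1, ..., x_n) these are the segments {l < j};
   their complements {l >= j}, the rows of the dual relation, are initial
   segments of the reversed flag. *)

Section MonomialAlgebra.
Variables (K : fieldType) (n : nat).
Implicit Types (S : rel 'I_n) (f : 'I_n -> 'I_n) (p q a : fsum K n) (w : word n).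

Fixpoint has_pair S w : bool :=
  match w with
  | i :: ((j :: _) as r) => S i j || has_pair S r
  | _ => false
  end.

Lemma has_pair_mid S u i j v : S i j -> has_pair S (u ++ [:: i, j & v]).
Proof.
move=> Sij; elim: u => [|a u IH] /=; first by rewrite Sij.
by case: u IH => [|b u] /= ->; rewrite orbT.
Qed.

Fixpoint split_pair S w : option (word n * 'I_n * 'I_n * word n) :=
  match w with
  | i :: ((j :: r) as r') =>
      if S i j then Some ([::], i, j, r)
      else omap (fun x => (i :: x.1.1.1, x.1.1.2, x.1.2, x.2)) (split_pair S r')
  | _ => None
  end.

Lemma split_pairP S w x : split_pair S w = Some x ->
  w = x.1.1.1 ++ [:: x.1.1.2, x.1.2 & x.2] /\ S x.1.1.2 x.1.2.
Proof.
elim: w x => [|a w IH] x //=; case: w IH => [|b r] IH //.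
case: ifP => Sab; first by case=> <-.
case E: (split_pair S (b :: r)) => [y|] //= [<-] /=.
by case: (IH y E) => -> ->.
Qed.

Lemma has_pair_split S w : has_pair S w -> split_pair S w <> None.
Proof.
elim: w => [|a w IH] //=; case: w IH => [|b r] IH //.
case: ifP => [_ _ //|_ /IH].
by case: (split_pair S (b :: r)).
Qed.

Lemma coef_cat p q w : coef (p ++ q) w = coef p w + coef q w.
Proof. by rewrite /coef big_cat. Qed.

Lemma coef_fsub p q w : coef (fsub p q) w = coef p w - coef q w.
Proof. by rewrite /fsub coef_cat /coef /fopp big_map sumrN. Qed.

Lemma coef_flatten (ps : seq (fsum K n)) w :
  coef (flatten ps) w = \sum_(p <- ps) coef p w.
Proof.
elim: ps => [|p ps IH] /=; first by rewrite big_nil /coef big_nil.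
by rewrite big_cons coef_cat IH.
Qed.

Lemma coef_lmulx i p w : coef (lmulx i p) w =
  if w is l :: r then (if l == i then coef p r else 0) else 0.
Proof.
rewrite /coef /lmulx big_map; case: w => [|l r]; first by rewrite big1.
under eq_bigl => t do rewrite eqseq_cons.
by case: (eqVneq l i) => //= _; rewrite big1.
Qed.

Definition lquot i p : fsum K n :=
  [seq (t.1, behead t.2) | t <- p & ohead t.2 == Some i].

Lemma coef_lquot i p r : coef (lquot i p) r = coef p (i :: r).
Proof.
rewrite /coef /lquot big_map big_filter_cond /=.
by apply: eq_bigl => t; case: t.2.
Qed.

Definition mono w : fsum K n := [:: (1, w)].

Lemma coef_mono u w : coef (mono u) w = (u == w)%:R.
Proof. by rewrite /coef big_cons big_nil addr0; case: eqP. Qed.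

Lemma mono_vanishing (P : pred (word n)) u :
  (forall w, P w -> coef (mono u) w = 0) <-> ~~ P u.
Proof.
split=> [H | /negPf Pu w]; last by rewrite coef_mono; case: eqP => // <-; rewrite Pu.
by apply/negP => /H; rewrite coef_mono eqxx; apply/eqP/oner_neq0.
Qed.

Lemma in_mono_idealP S p :
  in_mono_ideal S p <-> forall w, ~~ has_pair S w -> coef p w = 0.
Proof.
split=> [[l [lS lp]] w hw | H].
  rewrite lp /coef big_map big1_seq // => t /andP [/eqP Et tl].
  by move: hw; rewrite -Et has_pair_mid //; move/allP: lS => /(_ t tl).
pose mk (t : K * word n) :=
  omap (fun x => (t.1, x.1.1.1, x.1.1.2, x.1.2, x.2)) (split_pair S t.2).
exists (pmap mk p); split.
  apply/allP => t; rewrite mem_pmap => /mapP [s _]; rewrite /mk.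
  case E: (split_pair S s.2) => [x|] //= [->] /=.
  by case: (split_pairP E).
have -> : [seq (t.1.1.1.1, t.1.1.1.2 ++ [:: t.1.1.2; t.1.2] ++ t.2) | t <- pmap mk p]
    = [seq t <- p | has_pair S t.2].
  elim: p {H} => [|t p IH] //=; rewrite /mk /=.
  case E: (split_pair S t.2) => [x|] /=.
    case: (split_pairP E) => Et Sx.
    have -> : has_pair S t.2 by rewrite Et has_pair_mid.
    by rewrite -Et -surjective_pairing -IH.
  by case: ifP => // /has_pair_split; rewrite E.
move=> w; rewrite /coef big_filter_cond.
case hw: (has_pair S w).
  by apply: eq_bigl => t; case: (eqVneq t.2 w) => [->|]; rewrite ?hw ?andbF.
rewrite -/(coef p w) H ?hw // big1 // => t /andP [pt /eqP Et].
by move: hw; rewrite -Et pt.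
Qed.

Definition flag_prefix f (k : nat) (l : 'I_n) : bool :=
  [exists m : 'I_n, (m < k)%N && (f m == l)].

Definition starts_in f (k : nat) w : bool :=
  if w is l :: _ then flag_prefix f k l else false.

Lemma in_flag_idealP S f k a : injective f ->
  in_flag_ideal S f k a <->
  forall w, ~~ has_pair S w && ~~ starts_in f k w -> coef a w = 0.
Proof.
move=> finj.
pose F (b : 'I_n -> fsum K n) :=
  flatten [seq lmulx (f m) (b m) | m : 'I_n <- enum 'I_n & (nat_of_ord m < k)%N].
have coefF b w : coef (F b) w =
    \sum_(m <- enum 'I_n) (if (m < k)%N then coef (lmulx (f m) (b m)) w else 0).
  by rewrite coef_flatten big_map big_filter big_mkcond.
have coefF0 b w : ~~ starts_in f k w -> coef (F b) w = 0.
  move=> hs; rewrite coefF big1 // => m _; case: ifP => // mk.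
  rewrite coef_lmulx; case: w hs => [|l r] //= /existsPn /(_ m).
  by rewrite mk /= eq_sym => /negPf ->.
split=> [[b /in_mono_idealP H] w /andP [hw hs] | H].
  by move: (H w hw); rewrite coef_fsub -/(F b) coefF0 // subr0.
exists (fun m => lquot (f m) a); apply/in_mono_idealP => w hw.
rewrite coef_fsub -/(F _).
case hs: (starts_in f k w); last by rewrite coefF0 ?hs // H ?hw ?hs // subr0.
case: w hw hs => [|l r] //= hw /existsP [m0 /andP [m0k /eqP fm0]].
rewrite coefF (bigD1_seq m0) ?mem_enum ?enum_uniq //= m0k coef_lmulx fm0 eqxx.
rewrite coef_lquot big1 ?addr0 ?subrr // => m mm0; case: ifP => // _.
by rewrite coef_lmulx -fm0; case: eqP => // /finj Em; rewrite Em eqxx in mm0.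
Qed.

Lemma in_flag_ideal_lmulxP S f (m : 'I_n) a : injective f ->
  in_flag_ideal S f m (lmulx (f m) a) <->
  forall r, ~~ has_pair S (f m :: r) -> coef a r = 0.
Proof.
move=> finj; rewrite in_flag_idealP //; split=> [H r hr | H [|l r]]; rewrite ?coef_lmulx //.
  have := H (f m :: r); rewrite coef_lmulx eqxx; apply; rewrite hr /=.
  apply/existsPn => m'; rewrite (inj_eq finj).
  by case: (eqVneq m' m) => [->|]; rewrite ?ltnn ?andbF.
by case: eqP => // -> /andP [/H].
Qed.

Lemma colon_flag_idealP S f (m : 'I_n) (j : nat) : injective f ->
  (forall a, in_flag_ideal S f m (lmulx (f m) a) <-> in_flag_ideal S f j a) <->
  (forall l, S (f m) l = flag_prefix f j l).
Proof.
move=> finj; split=> [H l | row a].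
  have := H (mono [:: l]).
  rewrite in_flag_ideal_lmulxP // in_flag_idealP //.
  rewrite (mono_vanishing (fun r => ~~ has_pair S (f m :: r))).
  rewrite (mono_vanishing (fun w => ~~ has_pair S w && ~~ starts_in f j w)) /=.
  by rewrite orbF !negbK => Hl; apply/idP/idP => /Hl.
rewrite in_flag_ideal_lmulxP // in_flag_idealP //.
have normal_cons r : ~~ has_pair S (f m :: r) = ~~ has_pair S r && ~~ starts_in f j r.
  by case: r => [|l r] //=; rewrite row negb_or andbC.
by split=> H w hw; apply: H; rewrite ?normal_cons // -normal_cons.
Qed.

Lemma initially_KoszulP S f : injective f ->
  initially_Koszul K S f <->
  forall m, exists j, (j <= n)%N /\ forall l, S (f m) l = flag_prefix f j l.
Proof.
move=> finj; split=> H m; have [j [jn Hj]] := H m; exists j; split => //;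
  exact/(colon_flag_idealP _ _ _ finj).
Qed.

End MonomialAlgebra.

Lemma flag_prefix_id n j (l : 'I_n) : flag_prefix id j l = (l < j)%N.
Proof.
apply/existsP/idP => [[m /andP [mj /eqP <-]] // | lj].
by exists l; rewrite lj eqxx.
Qed.

Lemma flag_prefix_rev n j (l : 'I_n) : flag_prefix (@rev_ord n) (n - j) l = (j <= l)%N.
Proof.
have ln := ltn_ord l.
apply/existsP/idP => [[m /andP [mj /eqP <-]] /= | jl].
  by have := ltn_ord m; lia.
by exists (rev_ord l); rewrite rev_ordK eqxx andbT /=; lia.
Qed.

Theorem mainTheorem9 (K : fieldType) (n : nat) (S : rel 'I_n) :
  initially_Koszul K S id ->
  initially_Koszul K (dual_rel S) (@rev_ord n).
Proof.
rewrite !initially_KoszulP //; last exact: rev_ord_inj.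
move=> rows m; have [j [jn row]] := rows (rev_ord m).
exists (n - j)%N; split; first lia.
by move=> l; rewrite /dual_rel row flag_prefix_id flag_prefix_rev -leqNgt.
Qed.
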